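(* Let $\Bbbk$ be an algebraically closed field of characteristic zero, $G$ a finite group, $\chi:G\to\Bbbk^\times$ a linear character, $g\in Z(G)$, $n\geq 2$ the multiplicative order of $\chi(g)$, and $\alpha\in\Bbbk$ with $\alpha(g^n-1)=0$ or $\chi^n=1$. Let $H$ be the $\Bbbk$-algebra generated by $\Bbbk G$ and $z$ with relations $z^n=\alpha(g^n-1)$ and $zs=\chi(s)sz$ for $s\in G$. Then for all $h_1,h_2\in\Bbbk G$ and $0\leq m\leq n-1$, there exists $h\in Z(\Bbbk G)$ with $h^2=h$ such that $(z^mh_1,z^mh_2)=(z^mh)$.
   Context: $(a_1,\dots,a_t)$ denotes the two-sided ideal of $H$ generated by $a_1,\dots,a_t$. *)

From HB Require Import structures.
From mathcomp Require Import all_boot all_order all_fingroup all_algebra.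
Set Implicit Arguments. Unset Strict Implicit. Unset Printing Implicit Defensive.
Import GRing.Theory.
Local Open Scope ring_scope.

(* The algebra H of the paper is realised concretely on its normal-form basis
   { z^i s : 0 <= i < n, s in G }: an element of H is a finitely supported
   coefficient function 'I_n * G -> k, the pair (i, s) standing for z^i s
   (z to the LEFT of the group element). *)

Definition fscale (k : fieldType) (T : finType) (c : k) (f : {ffun T -> k})
  : {ffun T -> k} := [ffun x => c * f x].

Section Taft.
Variables (k : fieldType) (gT : finGroupType) (n : nat) (chi : gT -> k)
  (g : gT) (alpha : k).

Definition gdelta (u : gT) : {ffun gT -> k} := [ffun s => (s == u)%:R].

Definition kGmul (a b : {ffun gT -> k}) : {ffun gT -> k} :=
  [ffun u => \sum_(s : gT) a s * b (s^-1 * u)%g].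

Definition Hbasis (i : nat) (s : gT) : {ffun 'I_n * gT -> k} :=
  [ffun c => ((nat_of_ord c.1 == i) && (c.2 == s))%:R].

(* product of basis vectors, computed from z s = chi(s) s z and
   z^n = alpha (g^n - 1):
   (z^i s)(z^j t) = chi(s)^{-j} z^{i+j} s t, and, when i+j >= n,
   z^{i+j} = z^{i+j-n} alpha (g^n - 1). *)
Definition Hbmul (a b : 'I_n * gT) : {ffun 'I_n * gT -> k} :=
  let i := nat_of_ord a.1 in let s := a.2 in
  let j := nat_of_ord b.1 in let t := b.2 in
  if (i + j < n)%N then fscale ((chi s)^-1 ^+ j) (Hbasis (i + j) (s * t)%g)
  else fscale (alpha * (chi s)^-1 ^+ j)
         (Hbasis (i + j - n) (g ^+ n * s * t)%g - Hbasis (i + j - n) (s * t)%g).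

Definition Hmul (x y : {ffun 'I_n * gT -> k}) : {ffun 'I_n * gT -> k} :=
  \sum_(a : 'I_n * gT) \sum_(b : 'I_n * gT) fscale (x a * y b) (Hbmul a b).

Definition zpow_kG (m : nat) (h : {ffun gT -> k}) : {ffun 'I_n * gT -> k} :=
  [ffun c => if nat_of_ord c.1 == m then h c.2 else 0].

Definition is_ideal (P : {ffun 'I_n * gT -> k} -> Prop) : Prop :=
  [/\ P 0, (forall x y, P x -> P y -> P (x + y)),
      (forall c x, P x -> P (fscale c x)) &
      (forall u x, P x -> P (Hmul u x) /\ P (Hmul x u))].

Definition ideal_gen (S : seq {ffun 'I_n * gT -> k}) (x : {ffun 'I_n * gT -> k})
  : Prop :=
  forall P, is_ideal P -> (forall s, s \in S -> P s) -> P x.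

End Taft.

From HB Require Import structures.
From mathcomp Require Import all_boot all_order all_fingroup all_algebra.
Set Implicit Arguments. Unset Strict Implicit. Unset Printing Implicit Defensive.
Import GRing.Theory.
Local Open Scope ring_scope.

(* Since |G| is invertible in k, averaging a linear projection of kG onto a
   two-sided ideal I over all left and right translations by G (Maschke's
   trick) gives a kG-bimodule projection pi onto I; then e := pi(1) is a
   central idempotent with a e = a for every a in I, so I = (e).
   In H, z^0 b * z^m a = z^m (b' a) with b'(s) = b(s) chi(s)^-m, and
   z^m a * z^0 b = z^m (a b); as chi has no zeros, every b' arises this way.
   Hence for every ideal P of H, {a | z^m a in P} is a two-sided ideal of kG,
   and the equality of kG-ideals (h1, h2) = (e) transfers to
   (z^m h1, z^m h2) = (z^m e). *)

Lemma span_ind (K : fieldType) (vT : vectType K) (Q : vT -> Prop) (X : seq vT) :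
    Q 0 -> (forall x y, Q x -> Q y -> Q (x + y)) -> (forall c x, Q x -> Q (c *: x)) ->
  {in X, forall x, Q x} -> forall v, v \in <<X>>%VS -> Q v.
Proof.
move=> Q0 QD QZ QX v vX; rewrite (coord_span (X := in_tuple X) vX).
apply: (big_ind Q) => // i _.
by apply/QZ/QX; rewrite -tnth_nth mem_tnth.
Qed.

Section GroupAlgebra.
Variables (k : fieldType) (gT : finGroupType).
Local Notation kG := {ffun gT -> k^o}.
Local Notation kGmul := (@kGmul k gT).
Local Notation delta := (gdelta k).

Definition bitrans (u v : gT) (a : kG) : kG := [ffun x => a (u^-1 * x * v^-1)%g].

Lemma bitrans_is_linear u v : linear (bitrans u v).
Proof. by move=> c a b; apply/ffunP=> x; rewrite !ffunE. Qed.
HB.instance Definition _ u v :=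
  GRing.isLinear.Build k kG kG _ (bitrans u v) (bitrans_is_linear u v).

Lemma bitransM u v u' v' a :
  bitrans u v (bitrans u' v' a) = bitrans (u * u') (v' * v) a.
Proof. by apply/ffunP=> x; rewrite !ffunE !invMg !mulgA. Qed.

Lemma bitrans1 a : bitrans 1 1 a = a.
Proof. by apply/ffunP=> x; rewrite !ffunE invg1 mul1g mulg1. Qed.

Lemma sum_gdelta_scale (V : lmodType k) u (F : gT -> V) :
  \sum_w delta u w *: F w = F u.
Proof.
rewrite (bigD1 u) //= big1 => [|w /negbTE wu]; last by rewrite ffunE wu scale0r.
by rewrite ffunE eqxx scale1r addr0.
Qed.

Lemma kGmul_suml a b : kGmul a b = \sum_u a u *: bitrans u 1 b.
Proof.
apply/ffunP=> x; rewrite !ffunE sum_ffunE; apply: eq_bigr => u _.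
by rewrite !ffunE invg1 mulg1.
Qed.

Lemma kGmul_sumr a b : kGmul a b = \sum_v b v *: bitrans 1 v a.
Proof.
apply/ffunP=> x; rewrite !ffunE sum_ffunE.
rewrite (reindex_inj (h := fun v => (x * v^-1)%g)) => [|v w /mulgI /invg_inj //].
apply: eq_bigr => v _; rewrite !ffunE invg1 mul1g invMg invgK mulgKV.
by rewrite mulrC.
Qed.

Lemma kGmul_gdeltal u a : kGmul (delta u) a = bitrans u 1 a.
Proof. by rewrite kGmul_suml sum_gdelta_scale. Qed.

Lemma kGmul_gdeltar v a : kGmul a (delta v) = bitrans 1 v a.
Proof. by rewrite kGmul_sumr sum_gdelta_scale. Qed.

Lemma kGmul1l a : kGmul (delta 1) a = a.
Proof. by rewrite kGmul_gdeltal bitrans1. Qed.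

Lemma kGmul1r a : kGmul a (delta 1) = a.
Proof. by rewrite kGmul_gdeltar bitrans1. Qed.

Definition kG_ideal (Q : kG -> Prop) : Prop :=
  [/\ Q 0, (forall a b, Q a -> Q b -> Q (a + b)),
      (forall c a, Q a -> Q (c *: a)) &
      (forall a b, Q b -> Q (kGmul a b) /\ Q (kGmul b a))].

Definition kG_ideal_gen (S : seq kG) (a : kG) : Prop :=
  forall Q, kG_ideal Q -> {in S, forall s, Q s} -> Q a.

Lemma kG_ideal_bitrans Q u v a : kG_ideal Q -> Q a -> Q (bitrans u v a).
Proof.
case=> _ _ _ QM Qa; rewrite -[u]mulg1 -[v]mulg1 -bitransM.
by rewrite -kGmul_gdeltal -kGmul_gdeltar; apply: (QM _ _ (QM _ _ Qa).2).1.
Qed.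

Section AveragedProjection.
Variable U : {vspace kG}.
Hypothesis bitransU : forall u v a, a \in U -> bitrans u v a \in U.

Definition avg_proj (x : kG) : kG := #|{: gT * gT}|%:R^-1 *:
  \sum_(p : gT * gT) bitrans p.1 p.2 (projv U (bitrans p.1^-1 p.2^-1 x)).

Lemma avg_proj_is_linear : linear avg_proj.
Proof.
move=> c x y; rewrite /avg_proj; under eq_bigr => p _ do rewrite !linearP.
by rewrite big_split -scaler_sumr scalerDr !scalerA mulrC.
Qed.
HB.instance Definition _ := GRing.isLinear.Build k kG kG _ avg_proj avg_proj_is_linear.

Lemma avg_proj_bitrans u v x : avg_proj (bitrans u v x) = bitrans u v (avg_proj x).
Proof.
rewrite /avg_proj [in RHS]linearZ [in RHS]linear_sum /=.
rewrite (reindex_inj (h := fun p => (u * p.1, p.2 * v)%g)); last first.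
  by move=> [? ?] [? ?] /= [/mulgI-> /mulIg->].
by congr (_ *: _); apply: eq_bigr => p _; rewrite !bitransM /= !invMg mulgKV mulKVg.
Qed.

Lemma avg_proj_kGmull a x : avg_proj (kGmul a x) = kGmul a (avg_proj x).
Proof.
by rewrite !kGmul_suml linear_sum; apply: eq_bigr => u _; rewrite linearZ /= avg_proj_bitrans.
Qed.

Lemma avg_proj_kGmulr a x : avg_proj (kGmul x a) = kGmul (avg_proj x) a.
Proof.
by rewrite !kGmul_sumr linear_sum; apply: eq_bigr => v _; rewrite linearZ /= avg_proj_bitrans.
Qed.

Lemma avg_proj_mem x : avg_proj x \in U.
Proof. by rewrite rpredZ // rpred_sum // => p _; apply/bitransU/memv_proj. Qed.

Hypothesis card_neq0 : (#|gT|%:R : k) != 0.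

Lemma avg_proj_id x : x \in U -> avg_proj x = x.
Proof.
move=> xU; rewrite /avg_proj (eq_bigr (fun=> x)) => [|p _]; last first.
  by rewrite projv_id ?bitransU // bitransM mulgV mulVg bitrans1.
by rewrite sumr_const -scaler_nat scalerA mulVf ?scale1r // card_prod natrM mulf_neq0.
Qed.

Definition central_idem : kG := avg_proj (delta 1).

Lemma central_idem_central x : kGmul central_idem x = kGmul x central_idem.
Proof. by rewrite -avg_proj_kGmulr -avg_proj_kGmull kGmul1l kGmul1r. Qed.

Lemma kGmul_central_idem a : a \in U -> kGmul a central_idem = a.
Proof. by move=> aU; rewrite -avg_proj_kGmull kGmul1r avg_proj_id. Qed.

Lemma central_idem_idem : kGmul central_idem central_idem = central_idem.
Proof. exact/kGmul_central_idem/avg_proj_mem. Qed.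

End AveragedProjection.

Definition bitrans_span (S : seq kG) : {vspace kG} :=
  <<[seq bitrans p.1 p.2 a | p <- enum [set: gT * gT]%type, a <- S]>>%VS.

Lemma mem_bitrans_span S a : a \in S -> a \in bitrans_span S.
Proof.
move=> aS; apply: memv_span; rewrite -(bitrans1 a).
by apply: (@allpairs_f _ _ _ (fun p b => bitrans p.1 p.2 b) _ _ (1%g, 1%g));
  rewrite ?mem_enum ?inE.
Qed.

Lemma bitrans_span_closed S u v a :
  a \in bitrans_span S -> bitrans u v a \in bitrans_span S.
Proof.
apply: (span_ind (Q := fun a => bitrans u v a \in _)) => [|x y|c x|x].
- by rewrite linear0 rpred0.
- by rewrite linearD; apply: rpredD.
- by rewrite linearZ; apply: rpredZ.
case/allpairsP=> [[[u' v'] b] [_ bS ->]]; rewrite bitransM; apply: memv_span.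
by apply: (@allpairs_f _ _ _ (fun p b => bitrans p.1 p.2 b) _ _ (u * u', v' * v)%g);
  rewrite ?mem_enum ?inE.
Qed.

Lemma kG_ideal_gen_bitrans_span S a : a \in bitrans_span S -> kG_ideal_gen S a.
Proof.
move=> aS Q Qideal QS; have [Q0 QD QZ _] := Qideal; apply: (span_ind _ _ _ _ aS) => //.
by move=> _ /allpairsP[[p b] [_ bS ->]]; apply: kG_ideal_bitrans Qideal (QS b bS).
Qed.

Theorem kG_ideal_central_idempotent (S : seq kG) : (#|gT|%:R : k) != 0 ->
  exists e : kG, [/\ forall x, kGmul e x = kGmul x e, kGmul e e = e,
    {in S, forall a, kG_ideal_gen [:: e] a} & kG_ideal_gen S e].
Proof.
move=> cardG; pose e := central_idem (bitrans_span S).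
exists e; split.
- exact: central_idem_central.
- exact: central_idem_idem (@bitrans_span_closed S) cardG.
- move=> a aS Q [_ _ _ QM] Qe.
  rewrite -(kGmul_central_idem (@bitrans_span_closed S) cardG (mem_bitrans_span aS)).
  exact: (QM a _ (Qe _ (mem_head _ _))).1.
apply: kG_ideal_gen_bitrans_span; exact: avg_proj_mem (@bitrans_span_closed S) _.
Qed.

End GroupAlgebra.

Section TaftAlgebra.
Variables (k : fieldType) (gT : finGroupType) (chi : gT -> k) (g : gT) (n : nat)
  (alpha : k).
Local Notation kG := {ffun gT -> k^o}.
Local Notation Hmul := (Hmul chi g alpha).
Local Notation zpow := (zpow_kG n).

Definition chi_twist (j : nat) (a : kG) : kG := [ffun s => a s * (chi s)^-1 ^+ j].

Lemma chi_twist0 a : chi_twist 0 a = a.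
Proof. by apply/ffunP=> s; rewrite ffunE mulr1. Qed.

Lemma sum_zpow_kG i (lt_in : (i < n)%N) a (F : 'I_n * gT -> k) :
  \sum_x zpow i a x * F x = \sum_s a s * F (Ordinal lt_in, s).
Proof.
rewrite (eq_bigr (fun x => zpow i a (x.1, x.2) * F (x.1, x.2))) => [|[] //].
rewrite -(pair_bigA _ (fun j s => zpow i a (j, s) * F (j, s))) /=.
rewrite (bigD1 (Ordinal lt_in)) //= [X in _ + X]big1 ?addr0 => [|j /= ji].
  by apply: eq_bigr => s _; rewrite ffunE eqxx.
apply: big1 => s _; rewrite ffunE ifF ?mul0r //.
by apply: contraNF ji => /eqP ji; apply/eqP/val_inj.
Qed.

Lemma HbmulE (x y : 'I_n * gT) c : (x.1 + y.1 < n)%N ->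
  Hbmul chi g alpha x y c =
    if (c.1 == (x.1 + y.1)%N :> nat) && (c.2 == x.2 * y.2)%g
    then (chi x.2)^-1 ^+ y.1 else 0.
Proof. by move=> lt_xy_n; rewrite /Hbmul lt_xy_n !ffunE mulr_natr mulrb. Qed.

Lemma sum_eq_mulg (F : gT -> k) s u :
  \sum_t (if u == s * t then F t else 0)%g = F (s^-1 * u)%g.
Proof.
rewrite -big_mkcond (big_pred1 (s^-1 * u)%g) // => t.
by rewrite [RHS]eq_sym -[RHS](can_eq (mulKg s)) mulKVg.
Qed.

Lemma Hmul_zpow_kG i j a b : (i + j < n)%N ->
  Hmul (zpow i a) (zpow j b) = zpow (i + j) (kGmul (chi_twist j a) b).
Proof.
move=> lt_ijn; have lt_in : (i < n)%N := leq_ltn_trans (leq_addr j i) lt_ijn.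
have lt_jn : (j < n)%N := leq_ltn_trans (leq_addl i j) lt_ijn.
apply/ffunP=> c; rewrite sum_ffunE.
have factor_x x : (\sum_y fscale (zpow i a x * zpow j b y) (Hbmul chi g alpha x y)) c =
    zpow i a x * \sum_y zpow j b y * Hbmul chi g alpha x y c.
  by rewrite sum_ffunE mulr_sumr; apply: eq_bigr => y _; rewrite ffunE mulrA.
rewrite (eq_bigr _ (fun x _ => factor_x x)) sum_zpow_kG.
under eq_bigr => s _ do rewrite (sum_zpow_kG lt_jn).
under eq_bigr => s _ do under eq_bigr => t _ do rewrite HbmulE //=.
rewrite !ffunE; have [_ | _] := eqVneq (c.1 : nat) (i + j)%N; last first.
  by rewrite big1 // => s _; rewrite big1 ?mulr0 // => t _; rewrite mulr0.
apply: eq_bigr => s _; rewrite ffunE.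
under eq_bigr => t _ do rewrite (fun_if (GRing.mul (b t))) mulr0.
by rewrite sum_eq_mulg mulrA mulrAC.
Qed.

Lemma zpow_kG0 m : zpow m (0 : kG) = 0.
Proof. by apply/ffunP=> x; rewrite !ffunE if_same. Qed.

Lemma zpow_kGD m (a b : kG) : zpow m (a + b) = zpow m a + zpow m b.
Proof. by apply/ffunP=> x; rewrite !ffunE; case: ifP; rewrite ?addr0. Qed.

Lemma zpow_kGZ m c (a : kG) : zpow m (c *: a) = fscale c (zpow m a).
Proof. by apply/ffunP=> x; rewrite !ffunE; case: ifP; rewrite ?mulr0 ?ffunE. Qed.

Hypothesis chi_neq0 : forall s, chi s != 0.

Lemma kG_ideal_zpow_kG P m : (m < n)%N -> is_ideal chi g alpha P ->
  kG_ideal (fun a => P (zpow m a)).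
Proof.
move=> lt_mn [P0 PD PZ PM]; split.
- by rewrite zpow_kG0.
- by move=> a b Pa Pb; rewrite zpow_kGD; apply: PD.
- by move=> c a Pa; rewrite zpow_kGZ; apply: PZ.
move=> a b Pb; split; last first.
  by have := (PM (zpow 0 a) _ Pb).2; rewrite Hmul_zpow_kG ?addn0 ?chi_twist0.
pose a' : kG := [ffun s => a s * chi s ^+ m].
have -> : a = chi_twist m a'.
  by apply/ffunP=> s; rewrite !ffunE -mulrA -exprMn mulfV ?expr1n ?mulr1.
by have := (PM (zpow 0 a') _ Pb).1; rewrite Hmul_zpow_kG ?add0n.
Qed.

Lemma ideal_gen_zpow_kG m (S T : seq kG) : (m < n)%N ->
    {in S, forall a, kG_ideal_gen T a} ->
  forall x, ideal_gen chi g alpha (map (zpow m) S) x ->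
    ideal_gen chi g alpha (map (zpow m) T) x.
Proof.
move=> lt_mn ST x Sx P Pideal PT; apply: Sx => // _ /mapP[a aS ->].
by apply: (ST a aS _ (kG_ideal_zpow_kG lt_mn Pideal)) => b bT; apply/PT/map_f.
Qed.

End TaftAlgebra.

Theorem lemma3p2 (k : closedFieldType) (gT : finGroupType) (chi : gT -> k)
  (g : gT) (n : nat) (alpha : k) :
  [pchar k] =i pred0 ->
  (forall s t : gT, chi (s * t)%g = chi s * chi t) ->
  (forall s : gT, chi s != 0) ->
  (forall s : gT, (g * s = s * g)%g) ->
  n.-primitive_root (chi g) -> (2 <= n)%N ->
  (fscale alpha (gdelta k (g ^+ n)%g - gdelta k 1%g) = 0 \/ (forall s, chi s ^+ n = 1)) ->
  forall (h1 h2 : {ffun gT -> k}) (m : nat), (m < n)%N ->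
  exists h : {ffun gT -> k},
    [/\ (forall x : {ffun gT -> k}, kGmul h x = kGmul x h),
        kGmul h h = h &
        forall x : {ffun 'I_n * gT -> k},
          ideal_gen chi g alpha [:: zpow_kG n m h1; zpow_kG n m h2] x <->
          ideal_gen chi g alpha [:: zpow_kG n m h] x].
Proof.
move=> char0 _ chi_neq0 _ _ _ _ h1 h2 m lt_mn.
have cardG : (#|gT|%:R : k) != 0.
  by rewrite ((pcharf0P k).1 char0) -lt0n; apply/card_gt0P; exists 1%g.
have [e [e_central e_idem h_e e_h]] := kG_ideal_central_idempotent [:: h1; h2] cardG.
exists e; split=> // x; split.
  exact: (ideal_gen_zpow_kG chi_neq0 (S := [:: h1; h2]) (T := [:: e])).
apply: (ideal_gen_zpow_kG chi_neq0 (S := [:: e]) (T := [:: h1; h2])) => //.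
by move=> a; rewrite inE => /eqP->.
Qed.
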